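(* Let $G$ be a torsion-free acylindrically hyperbolic group and let $g\in G$ be a generalised loxodromic element. Then $g$ is chiral, i.e. there is no $n\geq1$ such that $g^n$ is conjugate to $g^{-n}$.
   Context: An action of $G$ on a metric space $X$ is acylindrical if for every $r\in\mathbb{N}$ there exist $R,N\in\mathbb{N}$ such that for all $x,y\in X$ with $d(x,y)\ge R$, the number of $g\in G$ with $\max\{d(x,gx),d(y,gy)\}\le r$ is at most $N$. $G$ is acylindrically hyperbolic if it admits a non-elementary acylindrical action on a Gromov-hyperbolic space; an element of $G$ that acts loxodromically for some such action is called a generalised loxodromic element. *)

From Stdlib Require Import Reals ZArith List.
Open Scope R_scope.

Record Group := MkGroup {
  gcar :> Type;
  gmul : gcar -> gcar -> gcar;
  gone : gcar;
  ginv : gcar -> gcar;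
  gmulA : forall a b c, gmul a (gmul b c) = gmul (gmul a b) c;
  gmul1l : forall a, gmul gone a = a;
  gmul1r : forall a, gmul a gone = a;
  gmulVl : forall a, gmul (ginv a) a = gone;
  gmulVr : forall a, gmul a (ginv a) = gone
}.

Arguments gmul {_} _ _.
Arguments gone {_}.
Arguments ginv {_} _.

Fixpoint gpow {G : Group} (g : G) (n : nat) : G :=
  match n with O => gone | S k => gmul g (gpow g k) end.

Definition gzpow {G : Group} (g : G) (z : Z) : G :=
  match z with
  | Z0 => gone
  | Zpos p => gpow g (Pos.to_nat p)
  | Zneg p => ginv (gpow g (Pos.to_nat p))
  end.

Definition torsion_free (G : Group) : Prop :=
  forall (g : G) (n : nat), (1 <= n)%nat -> gpow g n = gone -> g = gone.

Definition chiral {G : Group} (g : G) : Prop :=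
  ~ exists (n : nat) (h : G),
      (1 <= n)%nat /\ gmul h (gmul (gpow g n) (ginv h)) = ginv (gpow g n).

Record MetricSpace := MkMetric {
  mcar :> Type;
  dist : mcar -> mcar -> R;
  dist_ge0 : forall x y, 0 <= dist x y;
  dist_eq0 : forall x y, dist x y = 0 <-> x = y;
  dist_sym : forall x y, dist x y = dist y x;
  dist_tri : forall x y z, dist x z <= dist x y + dist y z
}.

Arguments dist {_} _ _.

Definition geodesic (X : MetricSpace) : Prop :=
  forall x y : X, exists gam : R -> X,
    gam 0 = x /\ gam (dist x y) = y /\
    forall s t, 0 <= s <= dist x y -> 0 <= t <= dist x y ->
      dist (gam s) (gam t) = Rabs (s - t).

Definition gromov_prod {X : MetricSpace} (x y w : X) : R :=
  (dist x w + dist y w - dist x y) / 2.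

Definition gromov_hyperbolic (X : MetricSpace) : Prop :=
  exists delta : R, 0 <= delta /\
    forall x y z w : X,
      gromov_prod x z w >= Rmin (gromov_prod x y w) (gromov_prod y z w) - delta.

Definition isometric_action (G : Group) (X : MetricSpace) (act : G -> X -> X) : Prop :=
  (forall x, act gone x = x) /\
  (forall g h x, act (gmul g h) x = act g (act h x)) /\
  (forall g x y, dist (act g x) (act g y) = dist x y).

Definition acylindrical (G : Group) (X : MetricSpace) (act : G -> X -> X) : Prop :=
  forall r : nat, exists Rr N : nat,
    forall x y : X, dist x y >= INR Rr ->
      forall l : list G, NoDup l ->
        (forall g, In g l -> Rmax (dist x (act g x)) (dist y (act g y)) <= INR r) ->
        (length l <= N)%nat.

(** sequences converging at infinity, and equivalence of such sequences
    (points of the sequential Gromov boundary), w.r.t. a basepoint o *)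
Definition conv_at_infty {X : MetricSpace} (o : X) (u : nat -> X) : Prop :=
  forall K : R, exists N : nat, forall i j, (N <= i)%nat -> (N <= j)%nat ->
    gromov_prod (u i) (u j) o >= K.

Definition equiv_at_infty {X : MetricSpace} (o : X) (u v : nat -> X) : Prop :=
  forall K : R, exists N : nat, forall i j, (N <= i)%nat -> (N <= j)%nat ->
    gromov_prod (u i) (v j) o >= K.

(** u represents a limit point of the action: a sequence in the orbit G.o
    converging at infinity *)
Definition limit_seq (G : Group) (X : MetricSpace) (act : G -> X -> X) (o : X)
  (u : nat -> X) : Prop :=
  (forall n, exists g : G, u n = act g o) /\ conv_at_infty o u.

(** non-elementary: the limit set has more than two points *)
Definition non_elementary (G : Group) (X : MetricSpace) (act : G -> X -> X) : Prop :=
  exists (o : X) (u v w : nat -> X),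
    limit_seq G X act o u /\ limit_seq G X act o v /\ limit_seq G X act o w /\
    ~ equiv_at_infty o u v /\ ~ equiv_at_infty o v w /\ ~ equiv_at_infty o u w.

Definition loxodromic (G : Group) (X : MetricSpace) (act : G -> X -> X) (g : G) : Prop :=
  exists (x : X) (lam C : R), 1 <= lam /\ 0 <= C /\
    forall m n : Z,
      IZR (Z.abs (m - n)) / lam - C <= dist (act (gzpow g m) x) (act (gzpow g n) x) /\
      dist (act (gzpow g m) x) (act (gzpow g n) x) <= lam * IZR (Z.abs (m - n)) + C.

Definition nonelem_acyl_hyp_action (G : Group) (X : MetricSpace) (act : G -> X -> X) : Prop :=
  geodesic X /\ gromov_hyperbolic X /\ isometric_action G X act /\
  acylindrical G X act /\ non_elementary G X act.

Definition acylindrically_hyperbolic (G : Group) : Prop :=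
  exists (X : MetricSpace) (act : G -> X -> X), nonelem_acyl_hyp_action G X act.

Definition generalised_loxodromic (G : Group) (g : G) : Prop :=
  exists (X : MetricSpace) (act : G -> X -> X),
    nonelem_acyl_hyp_action G X act /\ loxodromic G X act g.

From Stdlib Require Import Reals ZArith List Lia Lra Classical IndefiniteDescription.
Open Scope R_scope.

(* Suppose h a h^-1 = a^-1 with a = g^n, and put c = h^2, which commutes with a.
   Since |a^k| := d(x, a^k x) grows linearly, some K has a doubling gain
   |a^2K| - |a^K| > 4 delta; then the orbit <a>x behaves like an axis, and every
   point z displaced by a^K exactly |a^K| (for instance z = c^j x) lies within |a^K|
   of it.  Correcting each c^j by an element of <a> yields elements commuting with a
   that move both x and a far point a^L x by less than |a^K|.  Acylindricity allows
   only finitely many of them, so some power c^p (p >= 1) lies in <a>.  Conjugation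
   by h fixes c^p and inverts <a>, so c^p is its own inverse; torsion-freeness then
   forces c^p = 1, h = 1, a^2 = 1 and finally a = 1, contradicting loxodromy. *)

Definition gcommute {G : Group} (u v : G) : Prop := gmul u v = gmul v u.

(* [gsubpow a s t] stands for the integer power a^(s - t). *)
Definition gsubpow {G : Group} (a : G) (s t : nat) : G :=
  gmul (gpow a s) (ginv (gpow a t)).

Section GroupFacts.

Variable G : Group.

Lemma gmul_cancel_l (u v w : G) : gmul u v = gmul u w -> v = w.
Proof.
  intros H.
  rewrite <- (gmul1l G v), <- (gmul1l G w), <- (gmulVl G u), <- !gmulA, H.
  reflexivity.
Qed.

Lemma gmul_cancel_r (u v w : G) : gmul v u = gmul w u -> v = w.
Proof.
  intros H.
  rewrite <- (gmul1r G v), <- (gmul1r G w), <- (gmulVr G u), !gmulA, H.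
  reflexivity.
Qed.

Lemma ginv_unique (u v : G) : gmul u v = gone -> v = ginv u.
Proof.
  intros H. rewrite <- (gmul1l G v), <- (gmulVl G u), <- gmulA, H, gmul1r.
  reflexivity.
Qed.

Lemma ginvM (u v : G) : ginv (gmul u v) = gmul (ginv v) (ginv u).
Proof.
  symmetry; apply ginv_unique.
  rewrite <- gmulA, (gmulA G v), gmulVr, gmul1l, gmulVr. reflexivity.
Qed.

Lemma ginvK (u : G) : ginv (ginv u) = u.
Proof. symmetry; apply ginv_unique, gmulVl. Qed.

Lemma ginv1 : ginv (@gone G) = gone.
Proof. symmetry; apply ginv_unique, gmul1l. Qed.

Lemma gpowD (a : G) i j : gpow a (i + j) = gmul (gpow a i) (gpow a j).
Proof.
  induction i as [|i IH]; simpl.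
  - now rewrite gmul1l.
  - now rewrite IH, gmulA.
Qed.

Lemma gpowM (a : G) n k : gpow (gpow a n) k = gpow a (n * k).
Proof.
  induction k as [|k IH]; simpl.
  - now rewrite Nat.mul_0_r.
  - rewrite IH, <- gpowD. f_equal. lia.
Qed.

Lemma gpow1n k : gpow (@gone G) k = gone.
Proof. induction k as [|k IH]; simpl; [|rewrite IH, gmul1l]; reflexivity. Qed.

Lemma gpowSr (a : G) k : gpow a (S k) = gmul (gpow a k) a.
Proof. rewrite <- Nat.add_1_r, gpowD; simpl. now rewrite gmul1r. Qed.

Lemma gpowVn (a : G) k : gpow (ginv a) k = ginv (gpow a k).
Proof.
  induction k as [|k IH]; simpl.
  - now rewrite ginv1.
  - now rewrite IH, <- ginvM, <- gpowSr.
Qed.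

Lemma gcommute_gpowr (u v : G) k : gcommute u v -> gcommute u (gpow v k).
Proof.
  unfold gcommute; intros H; induction k as [|k IH]; simpl.
  - now rewrite gmul1l, gmul1r.
  - now rewrite gmulA, H, <- gmulA, IH, gmulA.
Qed.

Lemma gcommute_gpow (u v : G) i j :
  gcommute u v -> gcommute (gpow u i) (gpow v j).
Proof.
  intros H. apply gcommute_gpowr. symmetry. apply gcommute_gpowr.
  symmetry; exact H.
Qed.

Lemma gcommute_ginvl (u v : G) : gcommute u v -> gcommute (ginv u) v.
Proof.
  unfold gcommute; intros H. apply (gmul_cancel_l u).
  rewrite gmulA, gmulVr, gmul1l, gmulA, H, <- gmulA, gmulVr, gmul1r.
  reflexivity.
Qed.

Lemma gcommute_mull (u v w : G) :
  gcommute u w -> gcommute v w -> gcommute (gmul u v) w.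
Proof.
  unfold gcommute; intros Hu Hv. now rewrite <- gmulA, Hv, gmulA, Hu, gmulA.
Qed.

Lemma conj_commute (h u : G) : gcommute h u -> gmul h (gmul u (ginv h)) = u.
Proof. intros H. now rewrite gmulA, H, <- gmulA, gmulVr, gmul1r. Qed.

Lemma conjM (h u v : G) :
  gmul h (gmul (gmul u v) (ginv h))
  = gmul (gmul h (gmul u (ginv h))) (gmul h (gmul v (ginv h))).
Proof.
  rewrite <- !gmulA. do 2 f_equal.
  now rewrite (gmulA G (ginv h)), gmulVl, gmul1l.
Qed.

Lemma conj_gpow (h a : G) k :
  gmul h (gmul (gpow a k) (ginv h)) = gpow (gmul h (gmul a (ginv h))) k.
Proof.
  induction k as [|k IH]; simpl.
  - now rewrite gmul1l, gmulVr.
  - now rewrite conjM, IH.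
Qed.

Lemma conj_ginv (h u : G) :
  gmul h (gmul (ginv u) (ginv h)) = ginv (gmul h (gmul u (ginv h))).
Proof. now rewrite !ginvM, ginvK, gmulA. Qed.

Lemma gsubpow_commute (a : G) s t k : gcommute (gsubpow a s t) (gpow a k).
Proof.
  assert (Hpow : forall i j, gcommute (gpow a i) (gpow a j))
    by (intros; now apply gcommute_gpow).
  apply gcommute_mull; [apply Hpow|].
  apply gcommute_ginvl, Hpow.
Qed.

Lemma gsubpow_addl (a : G) s t k :
  gmul (gsubpow a s t) (gpow a k) = gsubpow a (s + k) t.
Proof.
  unfold gsubpow. rewrite <- gmulA, (gcommute_ginvl _ _ (gcommute_gpow a a t k eq_refl)).
  now rewrite gmulA, gpowD.
Qed.

Lemma gsubpow_addr (a : G) s t k :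
  gmul (ginv (gpow a k)) (gsubpow a s t) = gsubpow a s (t + k).
Proof.
  unfold gsubpow. rewrite gmulA, (gcommute_ginvl _ _ (gcommute_gpow a a k s eq_refl)).
  now rewrite <- gmulA, <- ginvM, <- gpowD.
Qed.

Lemma gsubpow_mul (a : G) s1 t1 s2 t2 :
  gmul (gsubpow a s1 t1) (gsubpow a s2 t2) = gsubpow a (s1 + s2) (t1 + t2).
Proof.
  unfold gsubpow at 2. rewrite gmulA, gsubpow_addl.
  unfold gsubpow. now rewrite <- gmulA, <- ginvM, <- gpowD, (Nat.add_comm t2 t1).
Qed.

Lemma gsubpow_inv (a : G) s t : ginv (gsubpow a s t) = gsubpow a t s.
Proof. unfold gsubpow. now rewrite ginvM, ginvK. Qed.

Lemma gsubpow_conj (a h : G) s t :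
  gmul h (gmul a (ginv h)) = ginv a ->
  gmul h (gmul (gsubpow a s t) (ginv h)) = gsubpow a t s.
Proof.
  intros H. unfold gsubpow.
  rewrite conjM, conj_ginv, !conj_gpow, H, !gpowVn, ginvK.
  apply gcommute_ginvl, gcommute_gpow. reflexivity.
Qed.

Lemma conj_inv_sq_commute (h a : G) :
  gmul h (gmul a (ginv h)) = ginv a -> gcommute (gpow h 2) a.
Proof.
  intros H.
  assert (Hha : gmul h a = gmul (ginv a) h)
    by now rewrite <- H, <- !gmulA, gmulVl, gmul1r.
  assert (Hhai : gmul h (ginv a) = gmul a h).
  { apply (gmul_cancel_l (ginv a)). rewrite gmulA, <- Hha.
    now rewrite <- gmulA, gmulVr, gmul1r, gmulA, gmulVl, gmul1l. }
  unfold gcommute; simpl.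
  now rewrite gmul1r, <- gmulA, Hha, gmulA, Hhai, <- gmulA.
Qed.

Hypothesis Htf : torsion_free G.

Lemma torsion_free_ginv_fixed (u : G) : ginv u = u -> u = gone.
Proof.
  intros H. apply (Htf u 2%nat); [lia|]. simpl.
  rewrite gmul1r. rewrite <- H at 2. apply gmulVr.
Qed.

(* Conjugation by h fixes c^p = (h^2)^p but inverts every element of <a>. *)
Lemma conj_inv_trivial (h a : G) p s t :
  gmul h (gmul a (ginv h)) = ginv a -> (1 <= p)%nat ->
  gpow (gpow h 2) p = gsubpow a s t -> a = gone.
Proof.
  intros Hconj Hp Hc.
  assert (Hfixed : gmul h (gmul (gsubpow a s t) (ginv h)) = gsubpow a s t).
  { rewrite <- Hc. apply conj_commute, gcommute_gpowr, gcommute_gpowr. reflexivity. }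
  assert (Hv : gsubpow a s t = gone).
  { apply torsion_free_ginv_fixed.
    now rewrite gsubpow_inv, <- (gsubpow_conj a h s t Hconj). }
  assert (Hh : h = gone).
  { apply (Htf h (2 * p)%nat); [lia|]. now rewrite <- gpowM, Hc. }
  rewrite Hh, ginv1, gmul1l, gmul1r in Hconj.
  now apply torsion_free_ginv_fixed.
Qed.

End GroupFacts.

Lemma gzpow_of_nat (G : Group) (g : G) m : gzpow g (Z.of_nat m) = gpow g m.
Proof. destruct m; simpl; [reflexivity|]. now rewrite SuccNat2Pos.id_succ. Qed.

Lemma pow2_beats_linear (A B : R) : exists i : nat, A + INR i * B < INR (2 ^ i).
Proof.
  destruct (INR_unbounded (Rabs A + 2 * Rabs B + 1)) as [k Hk].
  exists (k + k)%nat. rewrite Nat.pow_add_r, mult_INR, plus_INR.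
  assert (Hp : INR (S k) <= INR (2 ^ k)) by (apply le_INR, Nat.pow_gt_lin_r; lia).
  rewrite S_INR in Hp.
  pose proof (Rle_abs A). pose proof (Rle_abs B).
  pose proof (Rabs_pos A). pose proof (Rabs_pos B).
  set (P := INR (2 ^ k)) in *. set (n := INR k) in *.
  assert (P * P >= (n + 1) * (n + 1)) by nra.
  nra.
Qed.

Lemma linear_growth_unbounded (f : nat -> R) (eps C : R) :
  0 < eps -> (forall k, eps * INR k - C <= f k) -> forall B, exists k, B <= f k.
Proof.
  intros Heps Hf B.
  destruct (INR_unbounded ((B + C) / eps)) as [k Hk].
  exists k. specialize (Hf k).
  assert (B + C < eps * INR k).
  { replace (B + C) with (eps * ((B + C) / eps)) by (field; lra).
    apply Rmult_lt_compat_l; lra. }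
  lra.
Qed.

(* If f (K + K) - f K < D for every K then f (2^i) <= f 1 + i D, which linear growth
   forbids. *)
Lemma exists_doubling_gap (f : nat -> R) (eps C D : R) :
  0 < eps -> (forall k, eps * INR k - C <= f k) ->
  exists K, D <= f (K + K)%nat - f K.
Proof.
  intros Heps Hf. apply NNPP. intros Hno.
  assert (Hsmall : forall K, f (K + K)%nat - f K < D).
  { intros K. apply Rnot_le_lt. intros HK. apply Hno. now exists K. }
  assert (Hlog : forall i, f (2 ^ i)%nat <= f 1%nat + INR i * D).
  { induction i as [|i IH]; [simpl; lra|].
    replace (2 ^ S i)%nat with (2 ^ i + 2 ^ i)%nat by (simpl; lia).
    rewrite S_INR. specialize (Hsmall (2 ^ i)%nat). lra. }
  destruct (pow2_beats_linear ((f 1%nat + C) / eps) (D / eps)) as [i Hi].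
  assert (Hlt : f 1%nat + C + INR i * D < eps * INR (2 ^ i)).
  { replace (f 1%nat + C + INR i * D)
      with (eps * ((f 1%nat + C) / eps + INR i * (D / eps))) by (field; lra).
    apply Rmult_lt_compat_l; lra. }
  specialize (Hlog i). specialize (Hf (2 ^ i)%nat). lra.
Qed.

Lemma real_descent (A : Type) (f : A -> R) (c : R) :
  (forall u : A, c <= f u -> exists v, f v <= f u - 1) ->
  forall u : A, exists v, f v < c.
Proof.
  intros Hstep.
  assert (Hn : forall (n : nat) u, f u <= c + INR n -> exists v, f v < c).
  { induction n as [|n IH]; intros u Hu;
      (destruct (Rlt_le_dec (f u) c) as [Hlt|Hge]; [now exists u|]);
      destruct (Hstep u Hge) as [v Hv].
    - exists v. simpl in Hu. lra.
    - apply (IH v). rewrite S_INR in Hu. lra. }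
  intros u. destruct (INR_unbounded (f u - c)) as [n Hn'].
  apply (Hn n u). lra.
Qed.

Definition four_point (X : MetricSpace) (delta : R) : Prop :=
  forall x y z w : X,
    gromov_prod x z w >= Rmin (gromov_prod x y w) (gromov_prod y z w) - delta.

Lemma four_point_dist (X : MetricSpace) (delta : R) :
  four_point X delta -> forall p q z w : X,
  dist p z + dist q w <= Rmax (dist p q + dist z w) (dist p w + dist q z) + 2 * delta.
Proof.
  intros H p q z w. specialize (H p q z w).
  unfold gromov_prod, Rmin, Rmax in *.
  destruct (Rle_dec _ _); destruct (Rle_dec _ _); lra.
Qed.

(* pm, p, pp are consecutive orbit points (step l, two-step distance l2) and z' is the
   translate of z.  The four-point inequality for pm, p, pp, z puts the farther of
   pm, pp at distance >= d(z,p) + 2 delta + 1 from z; the one for p, pp, z', z bounds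
   the sum of both distances by 2 d(z,p) + 2 delta. *)
Lemma closer_neighbour (X : MetricSpace) (delta : R) (pm p pp z z' : X) (l l2 : R) :
  four_point X delta ->
  dist pm pp = l2 -> dist pm p = l -> dist p pp = l -> dist z' z = l ->
  dist p z' = dist pm z -> dist pp z' = dist p z ->
  4 * delta + 1 <= l2 - l -> l <= dist z p ->
  dist z pm <= dist z p - 1 \/ dist z pp <= dist z p - 1.
Proof.
  intros Hfour E1 E2 E3 E4 E5 E6 Hgap Hfar.
  pose proof (four_point_dist X delta Hfour pm p pp z) as A.
  pose proof (four_point_dist X delta Hfour p pp z' z) as B.
  pose proof (dist_sym X pm z). pose proof (dist_sym X pp z). pose proof (dist_sym X p z).
  revert A B; unfold Rmax.
  destruct (Rle_dec _ _); destruct (Rle_dec _ _); intros; lra.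
Qed.

Lemma acylindrical_collision (G : Group) (X : MetricSpace) (act : G -> X -> X) :
  acylindrical G X act -> forall r : nat, exists Rr : nat,
  forall (x y : X) (e : nat -> G), INR Rr <= dist x y ->
  (forall j, dist x (act (e j) x) <= INR r /\ dist y (act (e j) y) <= INR r) ->
  exists i j, (i < j)%nat /\ e i = e j.
Proof.
  intros Hacyl r. destruct (Hacyl r) as [Rr [N HN]]. exists Rr.
  intros x y e Hxy Hmove. apply NNPP. intros Hinj.
  assert (Hnodup : forall m b, NoDup (map e (seq b m))).
  { induction m as [|m IH]; intros b; simpl; constructor; [|apply IH].
    intros Hin. apply in_map_iff in Hin as [k [Hk Hin]]. apply in_seq in Hin.
    apply Hinj. exists b, k. split; [lia | auto]. }
  assert (Hlen : (length (map e (seq 0 (S N))) <= N)%nat).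
  { apply (HN x y); [lra | apply Hnodup |].
    intros u Hu. apply in_map_iff in Hu as [j [<- _]].
    destruct (Hmove j). now apply Rmax_lub. }
  rewrite length_map, length_seq in Hlen. lia.
Qed.

Section IsometricAction.

Variables (G : Group) (X : MetricSpace) (act : G -> X -> X).
Hypothesis Hiso : isometric_action G X act.

Lemma act1 y : act gone y = y.
Proof. apply Hiso. Qed.

Lemma actM u v y : act (gmul u v) y = act u (act v y).
Proof. apply Hiso. Qed.

Lemma dist_act u y y' : dist (act u y) (act u y') = dist y y'.
Proof. apply Hiso. Qed.

Lemma dist_actV u y y' : dist (act (ginv u) y) y' = dist y (act u y').
Proof. now rewrite <- (dist_act u), <- actM, gmulVr, act1. Qed.

Lemma dist_act_commute u w y :
  gcommute u w -> dist (act w y) (act u (act w y)) = dist y (act u y).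
Proof. intros H. now rewrite <- actM, H, actM, dist_act. Qed.

Lemma loxodromic_pow_growth (g : G) n :
  loxodromic G X act g -> (1 <= n)%nat ->
  exists x eps C, 0 < eps /\
    forall k, eps * INR k - C <= dist x (act (gpow (gpow g n) k) x).
Proof.
  intros [x [lam [C [Hlam [_ Hq]]]]] Hn.
  exists x, (/ lam), C. split; [apply Rinv_0_lt_compat; lra|].
  intros k. destruct (Hq (Z.of_nat (n * k)) 0%Z) as [Hlow _].
  rewrite Z.sub_0_r, Z.abs_eq, <- INR_IZR_INZ, gzpow_of_nat in Hlow by lia.
  simpl gzpow in Hlow. rewrite act1 in Hlow.
  rewrite gpowM, dist_sym.
  assert (INR k <= INR (n * k)) by (apply le_INR; nia).
  assert (/ lam * INR k <= / lam * INR (n * k)).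
  { apply Rmult_le_compat_l; [left; apply Rinv_0_lt_compat; lra | assumption]. }
  unfold Rdiv in Hlow. lra.
Qed.

Lemma growth_nontrivial (a : G) (x : X) (eps C : R) :
  0 < eps -> (forall k, eps * INR k - C <= dist x (act (gpow a k) x)) -> a <> gone.
Proof.
  intros Heps Hgrowth ->.
  destruct (linear_growth_unbounded _ _ _ Heps Hgrowth 1) as [k Hk].
  rewrite gpow1n, act1, (proj2 (dist_eq0 X x x) eq_refl) in Hk. lra.
Qed.

Section QuasiAxis.

Variables (delta : R) (a : G) (x : X) (K : nat).
Hypothesis Hfour : four_point X delta.
Hypothesis Hgap :
  4 * delta + 1 <= dist x (act (gpow a (K + K)) x) - dist x (act (gpow a K) x).

Lemma orbit_step z s t :
  dist (act (gpow a K) z) z = dist x (act (gpow a K) x) ->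
  dist x (act (gpow a K) x) <= dist z (act (gsubpow a s t) x) ->
  exists s' t', dist z (act (gsubpow a s' t') x) <= dist z (act (gsubpow a s t) x) - 1.
Proof.
  intros Hz Hfar.
  set (p := act (gsubpow a s t) x) in *.
  assert (Hmove : forall k, dist p (act (gpow a k) p) = dist x (act (gpow a k) x)).
  { intros k. apply dist_act_commute. symmetry. apply gsubpow_commute. }
  destruct (closer_neighbour X delta (act (ginv (gpow a K)) p) p (act (gpow a K) p)
              z (act (gpow a K) z) (dist x (act (gpow a K) x))
              (dist x (act (gpow a (K + K)) x)) Hfour) as [Hm | Hp].
  - now rewrite dist_actV, <- actM, <- gpowD, Hmove.
  - now rewrite dist_actV, Hmove.
  - apply Hmove.
  - exact Hz.
  - now rewrite dist_actV.
  - apply dist_act.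
  - exact Hgap.
  - exact Hfar.
  - exists s, (t + K)%nat. now rewrite <- gsubpow_addr, actM.
  - exists (s + K)%nat, t.
    now rewrite <- gsubpow_addl, (gsubpow_commute G a s t K), actM.
Qed.

Lemma near_orbit z :
  dist (act (gpow a K) z) z = dist x (act (gpow a K) x) ->
  exists s t, dist z (act (gsubpow a s t) x) < dist x (act (gpow a K) x).
Proof.
  intros Hz.
  set (f := fun st : nat * nat => dist z (act (gsubpow a (fst st) (snd st)) x)).
  assert (Hstep : forall st, dist x (act (gpow a K) x) <= f st ->
                  exists st', f st' <= f st - 1).
  { intros [s t] Hfar. destruct (orbit_step z s t Hz Hfar) as [s' [t' Hcloser]].
    now exists (s', t'). }
  destruct (real_descent _ f _ Hstep (0, 0)%nat) as [[s t] Hst].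
  now exists s, t.
Qed.

End QuasiAxis.

Lemma centralizer_power_in_cyclic (delta : R) (a c : G) (x : X) (eps C : R) :
  four_point X delta -> acylindrical G X act -> 0 < eps ->
  (forall k, eps * INR k - C <= dist x (act (gpow a k) x)) -> gcommute c a ->
  exists p s t, (1 <= p)%nat /\ gpow c p = gsubpow a s t.
Proof.
  intros Hfour Hacyl Heps Hgrowth Hca.
  destruct (exists_doubling_gap _ _ _ (4 * delta + 1) Heps Hgrowth) as [K HK].
  set (l := dist x (act (gpow a K) x)) in *.
  assert (Hnear : forall j, exists st : nat * nat,
             dist (act (gpow c j) x) (act (gsubpow a (fst st) (snd st)) x) < l).
  { intros j. destruct (near_orbit delta a x K Hfour HK (act (gpow c j) x))
      as [s [t Hst]].
    - rewrite dist_sym. apply dist_act_commute, gcommute_gpow.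
      symmetry; exact Hca.
    - now exists (s, t). }
  destruct (functional_choice _ Hnear) as [m Hm].
  set (e := fun j => gmul (ginv (gsubpow a (fst (m j)) (snd (m j)))) (gpow c j)).
  assert (Hecomm : forall j k, gcommute (e j) (gpow a k)).
  { intros j k. apply gcommute_mull.
    - apply gcommute_ginvl, gsubpow_commute.
    - now apply gcommute_gpow. }
  assert (Hemove : forall j, dist x (act (e j) x) < l).
  { intros j. unfold e. rewrite actM, dist_sym, dist_actV. apply Hm. }
  destruct (INR_unbounded l) as [r Hr].
  destruct (acylindrical_collision G X act Hacyl r) as [Rr HRr].
  destruct (linear_growth_unbounded _ _ _ Heps Hgrowth (INR Rr)) as [L HL].
  destruct (HRr x (act (gpow a L) x) e HL) as [i [j [Hij Heij]]].
  { intros j. rewrite dist_act_commute by apply Hecomm.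
    specialize (Hemove j). split; lra. }
  exists (j - i)%nat, (fst (m j) + snd (m i))%nat, (snd (m j) + fst (m i))%nat.
  split; [lia|].
  assert (Hji : gpow c j = gmul (gpow c (j - i)) (gpow c i))
    by (rewrite <- gpowD; f_equal; lia).
  unfold e in Heij. rewrite Hji, gmulA in Heij. apply gmul_cancel_r in Heij.
  rewrite <- gsubpow_mul, <- (gsubpow_inv G a (fst (m i))), Heij.
  now rewrite gmulA, gmulVr, gmul1l.
Qed.

End IsometricAction.

Theorem lemma2p8 (G : Group) (Htf : torsion_free G)
  (Hah : acylindrically_hyperbolic G) (g : G)
  (Hg : generalised_loxodromic G g) : chiral g.
Proof.
  intros [n [h [Hn Hconj]]].
  destruct Hg as [X [act [[_ [[delta [_ Hfour]] [Hiso [Hacyl _]]]] Hlox]]].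
  destruct (loxodromic_pow_growth G X act Hiso g n Hlox Hn)
    as [x [eps [C [Heps Hgrowth]]]].
  destruct (centralizer_power_in_cyclic G X act Hiso delta (gpow g n) (gpow h 2)
              x eps C Hfour Hacyl Heps Hgrowth (conj_inv_sq_commute G h _ Hconj))
    as [p [s [t [Hp Hc]]]].
  apply (growth_nontrivial G X act Hiso _ x eps C Heps Hgrowth).
  exact (conj_inv_trivial G Htf h _ p s t Hconj Hp Hc).
Qed.
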